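(* Let $\tau\in\mathbb R$ and let $(\vartheta(s),\omega(s))$, $s\in J$ ($J$ an interval containing $0$), be a $C^1$ solution with $\vartheta(s)\in(-\pi/2,\pi/2)$ of Hamilton's equations for $H(\vartheta,\omega)=\frac12(\omega^2+\tau^2\tan^2\vartheta)$, namely $\dot\vartheta=\omega$, $\dot\omega=-\tau^2\tan\vartheta/\cos^2\vartheta$, with $\vartheta(0)=0$. Let $E\ge0$ be defined by $E^2=2H(\vartheta(s),\omega(s))$ (a constant along the solution), assume $E^2+\tau^2>0$ and set $\Omega=\sqrt{E^2+\tau^2}$. Then $\sin^2\vartheta(s)=\frac{E^2}{\Omega^2}\sin^2(\Omega s)$ for all $s\in J$. *)

From Stdlib Require Import Reals.
From Coquelicot Require Import Coquelicot.
Open Scope R_scope.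

Definition is_interval (J : R -> Prop) : Prop :=
  forall a b x, J a -> J b -> a <= x <= b -> J x.

(* f has derivative f' at every point of J, relative to J
   (one-sided at endpoints belonging to J). *)
Definition has_deriv_on (J : R -> Prop) (f f' : R -> R) : Prop :=
  forall s, J s ->
    filterlim (fun h => (f (s + h) - f s) / h)
      (within (fun h => h <> 0 /\ J (s + h)) (locally 0))
      (locally (f' s)).

Definition continuous_on_set (J : R -> Prop) (f : R -> R) : Prop :=
  forall s, J s -> filterlim f (within J (locally s)) (locally (f s)).

From Stdlib Require Import Reals Lra.
From Coquelicot Require Import Coquelicot.
Open Scope R_scope.

(* With u = sin theta and v = cos theta * omega we have u' = v, and conservation of
   the energy omega^2 + tau^2 tan^2 theta = E^2 turns the equation for omega into
   v' = -(E^2 + tau^2) u.  So u solves u'' = -Omega^2 u with u(0) = 0 and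
   u'(0) = omega(0), where omega(0)^2 = E^2, giving Omega u = omega(0) sin(Omega s).
   Both conservation laws come from "zero derivative on an interval implies constant",
   here for derivatives taken relative to J (one-sided at endpoints of J); the
   oscillator is solved via the conserved quantity
   (Omega u - Omega u(0) cos - v(0) sin)^2 + (v + Omega u(0) sin - v(0) cos)^2. *)

Lemma locally_interval (J : R -> Prop) a b x :
  is_interval J -> J a -> J b -> a < x < b -> locally x J.
Proof.
  intros hJ Ja Jb Hx.
  set (r := Rmin (x - a) (b - x)).
  assert (Hr : 0 < r) by (apply Rmin_pos; lra).
  exists (mkposreal r Hr); intros y Hy.
  change (Rabs (y - x) < r) in Hy; apply Rabs_def2 in Hy.
  generalize (Rmin_l (x - a) (b - x)) (Rmin_r (x - a) (b - x)); fold r; intros.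
  apply (hJ a b); auto; lra.
Qed.

Section RelativeDerivative.
Variables (J : R -> Prop) (f f' : R -> R).
Hypothesis hf : has_deriv_on J f f'.

Lemma has_deriv_on_quotient s : J s -> forall eps, 0 < eps ->
  exists del, 0 < del /\ forall h, Rabs h < del -> h <> 0 -> J (s + h) ->
    Rabs ((f (s + h) - f s) / h - f' s) < eps.
Proof.
  intros Js eps Heps.
  destruct (hf s Js _ (locally_ball (f' s) (mkposreal eps Heps))) as [del Hdel].
  exists del; split; [apply cond_pos|].
  intros h Hh Hh0 HJ; apply (Hdel h); [|split; auto].
  change (Rabs (h - 0) < del); rewrite Rminus_0_r; exact Hh.
Qed.

Lemma has_deriv_on_is_derive s : locally s J -> is_derive f s (f' s).
Proof.
  intros [r Hr]; apply is_derive_Reals; intros eps Heps.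
  destruct (has_deriv_on_quotient s (locally_singleton _ _ (ex_intro _ r Hr)) eps Heps)
    as [del [Hdel Hq]].
  exists (mkposreal _ (Rmin_pos _ _ Hdel (cond_pos r))); simpl; intros h Hh0 Hh.
  apply Hq; auto.
  - apply Rlt_le_trans with (1 := Hh), Rmin_l.
  - apply Hr; change (Rabs (s + h - s) < r); replace (s + h - s) with h by ring.
    apply Rlt_le_trans with (1 := Hh), Rmin_r.
Qed.

Lemma has_deriv_on_local_bound s : J s -> exists del, 0 < del /\
  forall y, J y -> Rabs (y - s) < del -> Rabs (f y - f s) <= (Rabs (f' s) + 1) * Rabs (y - s).
Proof.
  intros Js.
  destruct (has_deriv_on_quotient s Js 1 Rlt_0_1) as [del [Hdel Hq]].
  exists del; split; auto; intros y Jy Hy.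
  destruct (Req_dec y s) as [->|Hne].
  { rewrite !Rminus_diag, Rabs_R0, Rmult_0_r; apply Rle_refl. }
  specialize (Hq (y - s)); replace (s + (y - s)) with y in Hq by ring.
  specialize (Hq Hy ltac:(lra) Jy).
  replace (f y - f s) with ((y - s) * (((f y - f s) / (y - s) - f' s) + f' s))
    by (field; lra).
  rewrite Rabs_mult, Rmult_comm.
  apply Rmult_le_compat_r; [apply Rabs_pos|].
  generalize (Rabs_triang ((f y - f s) / (y - s) - f' s) (f' s)); lra.
Qed.

Lemma has_deriv_on_continuous : continuous_on_set J f.
Proof.
  intros s Js; apply filterlim_locally; intros eps.
  destruct (has_deriv_on_local_bound s Js) as [del [Hdel Hb]].
  set (C := Rabs (f' s) + 1).
  assert (HC : 0 < C) by (generalize (Rabs_pos (f' s)); unfold C; lra).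
  exists (mkposreal _ (Rmin_pos _ _ Hdel (Rdiv_lt_0_compat _ _ (cond_pos eps) HC))).
  intros y Hy Jy; change (Rabs (y - s) < Rmin del (eps / C)) in Hy.
  change (Rabs (f y - f s) < eps).
  apply Rle_lt_trans with (1 := Hb y Jy (Rlt_le_trans _ _ _ Hy (Rmin_l _ _))).
  apply Rlt_le_trans with (C * (eps / C)); [|right; field; lra].
  apply Rmult_lt_compat_l; auto.
  apply Rlt_le_trans with (1 := Hy), Rmin_r.
Qed.

End RelativeDerivative.

Section ZeroDerivative.
Variables (J : R -> Prop) (G : R -> R).
Hypothesis hJ : is_interval J.
Hypothesis hG : continuous_on_set J G.
Hypothesis hG' : forall s, locally s J -> is_derive G s 0.

Lemma zero_derivative_const_open a b x y :
  J a -> J b -> a < x < b -> a < y < b -> G x = G y.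
Proof.
  intros Ja Jb Hx Hy.
  assert (Hin : forall z, Rmin x y <= z <= Rmax x y -> a < z < b).
  { intros z Hz; generalize (Rmin_glb_lt x y a) (Rmax_lub_lt x y b); intros; lra. }
  assert (HD : forall z, Rmin x y <= z <= Rmax x y -> is_derive G z 0).
  { intros z Hz; apply hG', (locally_interval J a b); auto. }
  destruct (MVT_gen G x y (fun _ => 0)) as [c [_ Hc]].
  - intros z Hz; apply HD; lra.
  - intros z Hz; apply continuity_pt_filterlim.
    apply (ex_derive_continuous (K := R_AbsRing) (V := R_NormedModule)).
    exists 0; apply HD; exact Hz.
  - lra.
Qed.

(* [G] is constant on [(a, b)]; continuity within [J] carries that value to each
   [e] in [[a, b]] along the (proper) filter of [(a, b)] near [e]. *)
Lemma zero_derivative_const_closed a b e :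
  J a -> J b -> a < b -> a <= e <= b -> G e = G ((a + b) / 2).
Proof.
  intros Ja Jb Hab He.
  set (F := within (fun y => a < y < b) (locally e)).
  assert (FF : ProperFilter' F).
  { constructor; [|apply within_filter, locally_filter].
    intros [eps Heps].
    destruct (Rlt_or_le e b) as [Heb|Heb].
    - set (y := e + Rmin eps (b - e) / 2).
      generalize (Rmin_l eps (b - e)) (Rmin_r eps (b - e))
        (Rmin_pos eps (b - e) (cond_pos eps) ltac:(lra)); intros.
      apply (Heps y).
      + change (Rabs (y - e) < eps); unfold y; rewrite Rabs_right; lra.
      + unfold y; lra.
    - set (y := e - Rmin eps (e - a) / 2).
      generalize (Rmin_l eps (e - a)) (Rmin_r eps (e - a))
        (Rmin_pos eps (e - a) (cond_pos eps) ltac:(lra)); intros.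
      apply (Heps y).
      + change (Rabs (y - e) < eps); unfold y; rewrite Rabs_left; lra.
      + unfold y; lra. }
  apply (filterlim_locally_unique (F := F) G).
  - apply (filterlim_filter_le_1 (F := within J (locally e))).
    + intros P; unfold F, within; apply filter_imp.
      intros y HP Hy; apply HP, (hJ a b); auto; lra.
    + apply hG, (hJ a b); auto.
  - apply (filterlim_ext_loc (fun _ => G ((a + b) / 2))).
    + unfold F, within; apply filter_forall; intros y Hy.
      apply (zero_derivative_const_open a b); auto; lra.
    + apply filterlim_const.
Qed.

Lemma zero_derivative_const a b : J a -> J b -> G a = G b.
Proof.
  intros Ja Jb.
  destruct (Rtotal_order a b) as [Hab|[->|Hab]]; auto.
  - rewrite (zero_derivative_const_closed a b a), (zero_derivative_const_closed a b b); auto; lra.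
  - rewrite (zero_derivative_const_closed b a a), (zero_derivative_const_closed b a b); auto; lra.
Qed.

End ZeroDerivative.

Section ContinuityRules.
Variable J : R -> Prop.
Implicit Types f g : R -> R.

Lemma continuous_on_set_const c : continuous_on_set J (fun _ => c).
Proof. intros s _; apply filterlim_const. Qed.

Lemma continuous_on_set_id : continuous_on_set J (fun s => s).
Proof.
  intros s _ P HP; unfold filtermap, within; revert HP; apply filter_imp; auto.
Qed.

Lemma continuous_on_set_plus f g :
  continuous_on_set J f -> continuous_on_set J g -> continuous_on_set J (fun s => f s + g s).
Proof.
  intros hf hg s Js.
  eapply filterlim_comp_2; [apply hf | apply hg | apply (filterlim_plus (f s) (g s))]; auto.
Qed.

Lemma continuous_on_set_mult f g :
  continuous_on_set J f -> continuous_on_set J g -> continuous_on_set J (fun s => f s * g s).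
Proof.
  intros hf hg s Js.
  eapply filterlim_comp_2; [apply hf | apply hg | apply (filterlim_mult (f s) (g s))]; auto.
Qed.

Lemma continuous_on_set_comp g f : (forall x, continuity_pt g x) ->
  continuous_on_set J f -> continuous_on_set J (fun s => g (f s)).
Proof.
  intros hg hf s Js.
  eapply filterlim_comp; [apply hf, Js | apply continuity_pt_filterlim, hg].
Qed.

Lemma continuous_on_set_opp f :
  continuous_on_set J f -> continuous_on_set J (fun s => - f s).
Proof.
  apply (continuous_on_set_comp Ropp); intros x.
  apply (continuity_pt_opp id), continuity_pt_id.
Qed.

Lemma continuous_on_set_pow f n :
  continuous_on_set J f -> continuous_on_set J (fun s => f s ^ n).
Proof.
  apply (continuous_on_set_comp (fun x => x ^ n)); intros x.
  apply derivable_continuous_pt, derivable_pt_pow.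
Qed.

Lemma continuous_on_set_div f g : (forall s, J s -> g s <> 0) ->
  continuous_on_set J f -> continuous_on_set J g -> continuous_on_set J (fun s => f s / g s).
Proof.
  intros hg0 hf hg s Js; unfold Rdiv.
  eapply filterlim_comp_2; [apply hf, Js | | apply (filterlim_mult (f s) (/ g s))].
  eapply filterlim_comp; [apply hg, Js |].
  apply continuity_pt_filterlim, (continuity_pt_inv (fun x => x)), hg0, Js.
  apply continuity_pt_id.
Qed.

End ContinuityRules.

Ltac continuity_on_set :=
  repeat match goal with
  | |- continuous_on_set _ (fun _ => _ + _) => apply continuous_on_set_plus
  | |- continuous_on_set _ (fun _ => _ - _) => apply continuous_on_set_plus
  | |- continuous_on_set _ (fun _ => - _) => apply continuous_on_set_opp
  | |- continuous_on_set _ (fun _ => _ * _) => apply continuous_on_set_mult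
  | |- continuous_on_set _ (fun _ => _ / _) => apply continuous_on_set_div
  | |- continuous_on_set _ (fun _ => _ ^ _) => apply continuous_on_set_pow
  | |- continuous_on_set _ (fun _ => sin _) => apply (continuous_on_set_comp _ sin _ continuity_sin)
  | |- continuous_on_set _ (fun _ => cos _) => apply (continuous_on_set_comp _ cos _ continuity_cos)
  (* [apply] eta-reduces [fun s => c * s] to [Rmult c]. *)
  | |- continuous_on_set _ (Rmult ?c) =>
      apply (continuous_on_set_mult _ (fun _ => c) (fun s => s))
  | |- continuous_on_set _ (fun s => s) => apply continuous_on_set_id
  | |- continuous_on_set _ (fun _ => ?c) => apply continuous_on_set_const
  end.

Section HarmonicOscillator.
Variables (J : R -> Prop) (u v : R -> R) (Om : R).
Hypothesis hJ : is_interval J.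
Hypothesis hu : continuous_on_set J u.
Hypothesis hv : continuous_on_set J v.
Hypothesis hu' : forall s, locally s J -> is_derive u s (v s).
Hypothesis hv' : forall s, locally s J -> is_derive v s (- Om ^ 2 * u s).

Lemma harmonic_oscillator_solution s : J 0 -> J s ->
  Om * u s = Om * u 0 * cos (Om * s) + v 0 * sin (Om * s).
Proof.
  intros J0 Js.
  set (A := fun s => Om * u s - Om * u 0 * cos (Om * s) - v 0 * sin (Om * s)).
  set (B := fun s => v s + Om * u 0 * sin (Om * s) - v 0 * cos (Om * s)).
  assert (HAB : A s ^ 2 + B s ^ 2 = A 0 ^ 2 + B 0 ^ 2).
  { apply (zero_derivative_const J (fun s => A s ^ 2 + B s ^ 2)); auto.
    - unfold A, B; continuity_on_set; auto.
    - intros x Hx; specialize (hu' x Hx); specialize (hv' x Hx).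
      unfold A, B; auto_derive.
      + repeat split; eexists; eassumption.
      + replace (Derive (fun y => u y) x) with (v x) by (symmetry; apply is_derive_unique, hu').
        replace (Derive (fun y => v y) x) with (- Om ^ 2 * u x)
          by (symmetry; apply is_derive_unique, hv').
        ring. }
  assert (HA0 : A 0 = 0) by (unfold A; rewrite Rmult_0_r, sin_0, cos_0; ring).
  assert (HB0 : B 0 = 0) by (unfold B; rewrite Rmult_0_r, sin_0, cos_0; ring).
  rewrite HA0, HB0 in HAB.
  assert (HA : A s = 0) by (apply (Rplus_sqr_eq_0 (A s) (B s)); unfold Rsqr; lra).
  unfold A in HA; lra.
Qed.

End HarmonicOscillator.

Lemma sin2_cos2_pow x : sin x ^ 2 + cos x ^ 2 = 1.
Proof. rewrite <- (sin2_cos2 x); unfold Rsqr; ring. Qed.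

Section Pendulum.
Variables (tau : R) (J : R -> Prop) (theta omega : R -> R).
Hypothesis hJ : is_interval J.
Hypothesis hrange : forall s, J s -> - (PI / 2) < theta s < PI / 2.
Hypothesis htheta : has_deriv_on J theta omega.
Hypothesis homega :
  has_deriv_on J omega (fun s => - (tau ^ 2) * tan (theta s) / cos (theta s) ^ 2).

Definition energy s := omega s ^ 2 + tau ^ 2 * tan (theta s) ^ 2.

Lemma cos_theta_neq0 s : J s -> cos (theta s) <> 0.
Proof. intros Js; destruct (hrange s Js); apply Rgt_not_eq, cos_gt_0; auto. Qed.

Lemma theta_derive s : locally s J -> is_derive theta s (omega s).
Proof. apply (has_deriv_on_is_derive J theta omega htheta). Qed.

Lemma omega_derive s : locally s J ->
  is_derive omega s (- (tau ^ 2) * (sin (theta s) / cos (theta s)) / cos (theta s) ^ 2).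
Proof. apply (has_deriv_on_is_derive J omega _ homega). Qed.

Lemma theta_continuous : continuous_on_set J theta.
Proof. apply (has_deriv_on_continuous J theta _ htheta). Qed.

Lemma omega_continuous : continuous_on_set J omega.
Proof. apply (has_deriv_on_continuous J omega _ homega). Qed.

Ltac replace_derivatives s Hs :=
  replace (Derive (fun y => theta y) s) with (omega s)
    by (symmetry; apply is_derive_unique, theta_derive, Hs);
  replace (Derive (fun y => omega y) s)
    with (- (tau ^ 2) * (sin (theta s) / cos (theta s)) / cos (theta s) ^ 2)
    by (symmetry; apply is_derive_unique, omega_derive, Hs).

Lemma energy_const a b : J a -> J b -> energy a = energy b.
Proof.
  apply (zero_derivative_const J energy hJ).
  - unfold energy, tan; continuity_on_set;
      auto using cos_theta_neq0, theta_continuous, omega_continuous.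
  - intros s Hs; pose proof (cos_theta_neq0 s (locally_singleton _ _ Hs)) as Hc.
    unfold energy, tan; auto_derive.
    + repeat split; auto; eexists; apply theta_derive || apply omega_derive; exact Hs.
    + replace_derivatives s Hs.
      transitivity (2 * tau ^ 2 * omega s * sin (theta s) *
        (sin (theta s) ^ 2 + cos (theta s) ^ 2 - 1) / cos (theta s) ^ 3); [field; auto|].
      rewrite sin2_cos2_pow; field; auto.
Qed.

Lemma sin_theta_continuous : continuous_on_set J (fun s => sin (theta s)).
Proof. continuity_on_set; apply theta_continuous. Qed.

Lemma cos_theta_omega_continuous : continuous_on_set J (fun s => cos (theta s) * omega s).
Proof. continuity_on_set; auto using theta_continuous, omega_continuous. Qed.

Lemma sin_theta_derive s : locally s J ->
  is_derive (fun s => sin (theta s)) s (cos (theta s) * omega s).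
Proof.
  intros Hs; auto_derive.
  - eexists; apply theta_derive, Hs.
  - replace_derivatives s Hs; ring.
Qed.

Lemma cos_theta_omega_derive s : locally s J ->
  is_derive (fun s => cos (theta s) * omega s) s (- (energy s + tau ^ 2) * sin (theta s)).
Proof.
  intros Hs; pose proof (cos_theta_neq0 s (locally_singleton _ _ Hs)) as Hc.
  auto_derive.
  - repeat split; eexists; apply theta_derive || apply omega_derive; exact Hs.
  - replace_derivatives s Hs; unfold energy, tan.
    transitivity (- sin (theta s) * (omega s ^ 2 +
      tau ^ 2 * (sin (theta s) ^ 2 + cos (theta s) ^ 2) / cos (theta s) ^ 2)); [|field; auto].
    rewrite sin2_cos2_pow; field; auto.
Qed.

End Pendulum.

Theorem lemma4p12 (tau : R) (J : R -> Prop) (theta omega : R -> R) (E : R)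
  (hJ : is_interval J) (hJ0 : J 0)
  (hrange : forall s, J s -> - (PI / 2) < theta s < PI / 2)
  (htheta : has_deriv_on J theta omega)
  (homega : has_deriv_on J omega
              (fun s => - (tau ^ 2) * tan (theta s) / (cos (theta s)) ^ 2))
  (hC1 : continuous_on_set J omega /\
         continuous_on_set J (fun s => - (tau ^ 2) * tan (theta s) / (cos (theta s)) ^ 2))
  (h0 : theta 0 = 0)
  (hE : 0 <= E)
  (hEdef : E ^ 2 = omega 0 ^ 2 + tau ^ 2 * (tan (theta 0)) ^ 2)
  (hpos : E ^ 2 + tau ^ 2 > 0) :
  forall s, J s ->
    (sin (theta s)) ^ 2 =
      E ^ 2 / (sqrt (E ^ 2 + tau ^ 2)) ^ 2 * (sin (sqrt (E ^ 2 + tau ^ 2) * s)) ^ 2.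
Proof.
  (* [hC1] is implied by [htheta] and [homega]. *)
  intros s Js.
  set (Om := sqrt (E ^ 2 + tau ^ 2)).
  assert (HOm2 : Om ^ 2 = E ^ 2 + tau ^ 2) by (apply pow2_sqrt; lra).
  assert (HOm : 0 < Om) by (apply sqrt_lt_R0; lra).
  rewrite h0, tan_0 in hEdef.
  assert (Henergy : forall x, J x -> energy tau theta omega x = E ^ 2).
  { intros x Jx; rewrite (energy_const tau J theta omega hJ hrange htheta homega x 0) by auto.
    unfold energy; rewrite h0, tan_0, hEdef; ring. }
  assert (Hsol : Om * sin (theta s) = omega 0 * sin (Om * s)).
  { rewrite (harmonic_oscillator_solution J (fun x => sin (theta x))
      (fun x => cos (theta x) * omega x) Om hJ); auto.
    - rewrite h0, sin_0, cos_0; ring.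
    - eapply sin_theta_continuous; eauto.
    - eapply cos_theta_omega_continuous; eauto.
    - eapply sin_theta_derive; eauto.
    - intros x Hx; rewrite HOm2, <- (Henergy x (locally_singleton _ _ Hx)).
      eapply cos_theta_omega_derive; eauto. }
  assert (Hsin : sin (theta s) = omega 0 * sin (Om * s) / Om).
  { apply (Rmult_eq_reg_l Om); [rewrite Hsol; field|]; lra. }
  rewrite Hsin, hEdef; field; lra.
Qed.
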